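(* Let $\mathbb{F}$ be a non-Archimedean local field with ring of integers $\mathcal{O}$, let $V$ and $W$ be finite-dimensional $\mathbb{F}$-vector spaces, and let $L\subset V$ be a lattice. Let $F_0\colon W\to V$ be an injective linear map. Then there exists a neighborhood $U$ of $F_0$ in $\mathrm{Hom}_{\mathbb{F}}(W,V)$ such that every $F\in U$ is injective and $$F^{-1}(\mathrm{Im}(F)\cap L)=F_0^{-1}(\mathrm{Im}(F_0)\cap L).$$
   Context: Finite-dimensional $\mathbb{F}$-vector spaces carry their natural (product) topology, and $\mathrm{Hom}_{\mathbb{F}}(W,V)$ is topologized as a finite-dimensional vector space. A lattice in $V$ is a compact open $\mathcal{O}$-submodule of $V$. *)

From HB Require Import structures.
From mathcomp Require Import all_boot all_order all_algebra.
From mathcomp Require Import reals.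
Set Implicit Arguments. Unset Strict Implicit. Unset Printing Implicit Defensive.
Import Order.TTheory GRing.Theory Num.Theory.
Local Open Scope ring_scope.

(* [B x e y] means "y lies in the open ball of radius e around x". *)
Section BallTopology.
Variables (R : realType) (T : Type) (B : T -> R -> T -> Prop).

Definition bopen (S : T -> Prop) : Prop :=
  forall x, S x -> exists2 e : R, 0 < e & forall y, B x e y -> S y.

Definition bnbhd (x : T) (U : T -> Prop) : Prop :=
  exists2 e : R, 0 < e & forall y, B x e y -> U y.

Definition bcompact (K : T -> Prop) : Prop :=
  forall (I : Type) (U : I -> T -> Prop),
    (forall i, bopen (U i)) ->
    (forall x, K x -> exists i, U i x) ->
    exists (k : nat) (f : 'I_k -> I), forall x, K x -> exists j, U (f j) x.

Definition blocally_compact : Prop :=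
  forall x : T, exists K, bcompact K /\ bnbhd x K.
End BallTopology.

Record nonarch_local_field (R : realType) (F : fieldType) := NALF {
  nabs : F -> R;
  nabs_ge0 : forall x, 0 <= nabs x;
  nabs_eq0 : forall x, nabs x = 0 <-> x = 0;
  nabsM : forall x y, nabs (x * y) = nabs x * nabs y;
  nabs_ultra : forall x y, nabs (x + y) <= Num.max (nabs x) (nabs y);
  nabs_nontriv : exists x, nabs x != 0 /\ nabs x != 1;
  nabs_complete : forall u : nat -> F,
    (forall e : R, 0 < e -> exists N, forall m n, (N <= m)%N -> (N <= n)%N ->
        nabs (u m - u n) < e) ->
    exists l, forall e : R, 0 < e -> exists N, forall n, (N <= n)%N -> nabs (u n - l) < e;
  nabs_loc_compact :
    blocally_compact (fun (x : F) (e : R) y => nabs (y - x) < e)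
}.

Section LocalFieldNotions.
Variables (R : realType) (F : fieldType) (K : nonarch_local_field R F).

Definition integers (a : F) : Prop := nabs K a <= 1.

Definition rball (n : nat) (x : 'rV[F]_n) (e : R) (y : 'rV[F]_n) : Prop :=
  forall j, nabs K (y 0 j - x 0 j) < e.

(* Topology on Hom(F^m, F^n) = 'M[F]_(m, n) as a finite-dim vector space. *)
Definition mball (m n : nat) (x : 'M[F]_(m, n)) (e : R) (y : 'M[F]_(m, n)) : Prop :=
  forall i j, nabs K (y i j - x i j) < e.

Definition is_lattice (n : nat) (L : 'rV[F]_n -> Prop) : Prop :=
  [/\ L 0,
      (forall u v, L u -> L v -> L (u + v)),
      (forall a u, integers a -> L u -> L (a *: u)),
      bopen (@rball n) L &
      bcompact (@rball n) L].
End LocalFieldNotions.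

From HB Require Import structures.
From mathcomp Require Import all_boot all_order all_algebra.
From mathcomp Require Import reals lra.
Import Order.TTheory GRing.Theory Num.Theory.
Local Open Scope ring_scope.

Set Implicit Arguments.
Unset Strict Implicit.
Unset Printing Implicit Defensive.

(* Fix a left inverse G of F0 and the ultrametric sup norm |.| on matrices, which is
   submultiplicative.  From w = w F G - w (F - F0) G one gets |w| <= |w F| |G| as soon as
   |F - F0| |G| < 1; in particular F is injective.  The lattice L contains the ball of
   some radius r around 0 and lies in the ball of some radius M.  Hence if w F or w F0
   lies in L then |w| <= M |G|, so w F - w F0 = w (F - F0) has norm < r once
   |F - F0| < r / (M |G|); it then lies in L, and L, being closed under addition,
   contains w F iff it contains w F0. *)

Section UltrametricNorm.
Variables (R : realType) (F : fieldType) (K : nonarch_local_field R F).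
Local Notation na := (nabs K).

Lemma nabs0 : na 0 = 0.
Proof. exact/nabs_eq0. Qed.

Lemma nabs1 : na 1 = 1.
Proof.
have h1 : na 1 != 0 by apply/eqP => /nabs_eq0 /eqP; rewrite oner_eq0.
by apply: (mulfI h1); rewrite mulr1 -nabsM mulr1.
Qed.

Lemma nabsN x : na (- x) = na x.
Proof.
have nabsN1 : na (-1) = 1.
  have := nabsM K (-1) (-1); rewrite mulrNN mulr1 nabs1 => /esym/eqP.
  rewrite -expr2 sqrf_eq1 => /orP[/eqP // | /eqP h].
  by have := nabs_ge0 K (-1); rewrite h ler0N1.
by rewrite -mulN1r nabsM nabsN1 mul1r.
Qed.

Lemma nabs_sum_le (I : Type) (r : seq I) (P : pred I) (f : I -> F) (a : R) :
  0 <= a -> (forall i, P i -> na (f i) <= a) -> na (\sum_(i <- r | P i) f i) <= a.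
Proof.
move=> a_ge0 f_le; elim/big_ind: _ => //; first by rewrite nabs0.
by move=> x y hx hy; apply: le_trans (nabs_ultra K x y) _; rewrite ge_max hx hy.
Qed.

Definition mxnorm p q (A : 'M[F]_(p, q)) : R :=
  \big[Num.max/0]_i \big[Num.max/0]_j na (A i j).

Section MatrixNorm.
Variables p q : nat.
Implicit Types A B : 'M[F]_(p, q).

Lemma mxnorm_ge0 A : 0 <= mxnorm A.
Proof. exact: bigmax_ge_id. Qed.

Lemma le_mxnorm A i j : na (A i j) <= mxnorm A.
Proof. by apply: le_trans (le_bigmax _ _ i); apply: le_bigmax. Qed.

Lemma mxnorm_le A a : 0 <= a -> (forall i j, na (A i j) <= a) -> mxnorm A <= a.
Proof. by move=> a_ge0 A_le; do 2![apply: bigmax_le => // ? _]. Qed.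

Lemma mxnorm_lt A a : 0 < a -> (forall i j, na (A i j) < a) -> mxnorm A < a.
Proof. by move=> a_gt0 A_lt; do 2![apply: bigmax_lt => // ? _]. Qed.

Lemma mxnorm_eq0 A : (mxnorm A == 0) = (A == 0).
Proof.
apply/idP/eqP => [/eqP A0 | ->]; last first.
  by rewrite eq_le mxnorm_ge0 andbT; apply: mxnorm_le => // i j; rewrite mxE nabs0.
apply/matrixP => i j; rewrite mxE; apply/(nabs_eq0 K)/eqP.
by rewrite eq_le nabs_ge0 andbT -A0 le_mxnorm.
Qed.

Lemma mxnorm0 : mxnorm (0 : 'M[F]_(p, q)) = 0.
Proof. by apply/eqP; rewrite mxnorm_eq0. Qed.

Lemma mxnormN A : mxnorm (- A) = mxnorm A.
Proof.
suff le_N B : mxnorm (- B) <= mxnorm B.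
  by apply: le_anti; rewrite le_N /= -{1}[A]opprK le_N.
by apply: mxnorm_le (mxnorm_ge0 _) _ => i j; rewrite mxE nabsN le_mxnorm.
Qed.

Lemma mxnormB A B : mxnorm (A - B) = mxnorm (B - A).
Proof. by rewrite -mxnormN opprB. Qed.

Lemma mxnorm_ultra A B : mxnorm (A + B) <= Num.max (mxnorm A) (mxnorm B).
Proof.
apply: mxnorm_le => [|i j]; first by rewrite le_max mxnorm_ge0.
rewrite mxE; apply: le_trans (nabs_ultra K _ _) _.
by rewrite ge_max !le_max !le_mxnorm orbT.
Qed.

End MatrixNorm.

Lemma mxnorm_mulmx p q s (A : 'M[F]_(p, q)) (B : 'M[F]_(q, s)) :
  mxnorm (A *m B) <= mxnorm A * mxnorm B.
Proof.
apply: mxnorm_le => [|i j]; first by rewrite mulr_ge0 ?mxnorm_ge0.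
rewrite mxE; apply: nabs_sum_le => [|k _]; first by rewrite mulr_ge0 ?mxnorm_ge0.
by rewrite nabsM ler_pM ?nabs_ge0 ?le_mxnorm.
Qed.

Lemma rball_mxnorm n (x y : 'rV[F]_n) e : 0 < e ->
  rball K x e y <-> mxnorm (y - x) < e.
Proof.
move=> e_gt0; split=> [xy | xy j].
  by apply: mxnorm_lt => // i j; rewrite ord1 !mxE; apply: xy.
by apply: le_lt_trans xy; move: (le_mxnorm (y - x) 0 j); rewrite !mxE.
Qed.

Lemma mball_mxnorm p q (A B : 'M[F]_(p, q)) e : 0 < e ->
  mball K A e B -> mxnorm (B - A) < e.
Proof. by move=> e_gt0 AB; apply: mxnorm_lt => // i j; rewrite !mxE; apply: AB. Qed.

Lemma mxnorm_le_perturbed_linv k m n (F0 F1 : 'M[F]_(m, n)) (G : 'M[F]_(n, m)) :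
  F0 *m G = 1%:M -> mxnorm (F1 - F0) * mxnorm G < 1 ->
  forall A : 'M[F]_(k, m), mxnorm A <= mxnorm (A *m F1) * mxnorm G.
Proof.
move=> F0G F1_near A.
have AE : A = A *m F1 *m G - A *m (F1 - F0) *m G.
  by rewrite -mulmxBl -mulmxBr subKr -mulmxA F0G mulmx1.
have le_main : mxnorm (A *m F1 *m G) <= mxnorm (A *m F1) * mxnorm G.
  exact: mxnorm_mulmx.
have le_rest :
    mxnorm (A *m (F1 - F0) *m G) <= mxnorm A * (mxnorm (F1 - F0) * mxnorm G).
  rewrite mulrA; apply: le_trans (mxnorm_mulmx _ _) _.
  exact: ler_wpM2r (mxnorm_ge0 G) _ _ (mxnorm_mulmx _ _).
have := mxnorm_ultra (A *m F1 *m G) (- (A *m (F1 - F0) *m G)).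
rewrite -AE mxnormN le_max => /orP[/le_trans-> // | /le_trans/(_ le_rest) A_le].
have A_le0 : mxnorm A <= 0.
  move: A_le F1_near (mxnorm_ge0 A); move: (_ * mxnorm G) (mxnorm A) => s a ? ? ?; nra.
by apply: le_trans A_le0 _; rewrite mulr_ge0 ?mxnorm_ge0.
Qed.

Lemma mulmx_inj_of_mxnorm_lbound m n (A : 'M[F]_(m, n)) (c : R) :
  (forall w : 'rV[F]_m, mxnorm w <= mxnorm (w *m A) * c) ->
  injective (fun w : 'rV[F]_m => w *m A).
Proof.
move=> lbound w w' /= ww'; apply/eqP.
rewrite -subr_eq0 -mxnorm_eq0 eq_le mxnorm_ge0 andbT.
by have := lbound (w - w'); rewrite mulmxBl ww' subrr mxnorm0 mul0r.
Qed.

Section BallsInRowSpace.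
Variables (n : nat) (S : 'rV[F]_n -> Prop).

Lemma bopen_mxnorm_ball : bopen (@rball R F K n) S -> S 0 ->
  exists2 r : R, 0 < r & forall y, mxnorm y < r -> S y.
Proof.
move=> S_open S0; have [r r_gt0 ballS] := S_open 0 S0.
by exists r => // y y_lt; apply/ballS/(rball_mxnorm _ _ r_gt0); rewrite subr0.
Qed.

Lemma bcompact_mxnorm_bounded : bcompact (@rball R F K n) S ->
  exists2 M : R, 0 <= M & forall x, S x -> mxnorm x <= M.
Proof.
move=> S_compact.
pose U k (y : 'rV[F]_n) := mxnorm y < k.+1%:R.
have U_open k : bopen (@rball R F K n) (U k).
  move=> y Uy; exists k.+1%:R => // y' /(rball_mxnorm _ _ (ltr0Sn _ _)) y'y.
  rewrite /U -(subrK y y'); apply: le_lt_trans (mxnorm_ultra _ _) _.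
  by rewrite gt_max y'y; apply: Uy.
have U_cover x : S x -> exists k, U k x.
  move=> _; exists (Num.Def.archi_bound (mxnorm x)).
  by apply: lt_le_trans (archi_boundP (mxnorm_ge0 x)) _; rewrite ler_nat.
have [k [f Uf]] := S_compact nat U U_open U_cover.
exists (\max_(j < k) f j).+1%:R => // x /Uf[j /ltW/le_trans]; apply.
by rewrite ler_nat ltnS leq_bigmax.
Qed.

Lemma addr_closed_ball_stable (r : R) :
  (forall u v, S u -> S v -> S (u + v)) -> (forall y, mxnorm y < r -> S y) ->
  forall x y, mxnorm (x - y) < r -> S x <-> S y.
Proof.
move=> SD ballS x y xy; split=> [Sx | Sy].
  by rewrite -(subrK x y); apply: SD Sx; apply: ballS; rewrite mxnormB.
by rewrite -(subrK y x); apply: SD Sy; apply: ballS.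
Qed.

End BallsInRowSpace.

End UltrametricNorm.

Lemma perturbation_radius (R : realFieldType) (M c r : R) :
  0 <= M -> 0 <= c -> 0 < r -> exists2 e : R, 0 < e & e * c < 1 /\ M * c * e < r.
Proof.
move=> M_ge0 c_ge0 r_gt0.
have Mr_gt0 : 0 < M + r by lra.
have c1_gt0 : 0 < c + 1 by lra.
have e_gt0 : 0 < r / ((M + r) * (c + 1)) by rewrite divr_gt0 ?mulr_gt0.
have : r / ((M + r) * (c + 1)) * (c + 1) * (M + r) = r.
  by rewrite -mulrA (mulrC (c + 1)) divfK // mulf_neq0 ?gt_eqF.
move: e_gt0; move: (r / _) => e e_gt0; rewrite (mulrDr e) mulr1 => eE.
exists e => //; rewrite -mulrA [c * e]mulrC.
have := mulr_ge0 (ltW e_gt0) c_ge0.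
by move: eE; move: (e * c) => g gE g_ge0; split; nra.
Qed.

Theorem proposition4p7 (R : realType) (F : fieldType)
  (K : nonarch_local_field R F) (m n : nat)
  (L : 'rV[F]_n -> Prop) (HL : is_lattice K L)
  (F0 : 'M[F]_(m, n)) (HF0 : injective (fun w : 'rV[F]_m => w *m F0)) :
  exists U : 'M[F]_(m, n) -> Prop,
    bnbhd (@mball R F K m n) F0 U /\
    forall Fm : 'M[F]_(m, n), U Fm ->
      injective (fun w : 'rV[F]_m => w *m Fm) /\
      (forall w : 'rV[F]_m,
         ((exists u : 'rV[F]_m, u *m Fm = w *m Fm) /\ L (w *m Fm)) <->
         ((exists u : 'rV[F]_m, u *m F0 = w *m F0) /\ L (w *m F0))).
Proof.
case: HL => L0 LD _ L_open L_compact.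
have [G F0G] : exists G, F0 *m G = 1%:M.
  by apply/row_freeP/inj_row_free => v vF0; apply: HF0; rewrite /= vF0 mul0mx.
have [r r_gt0 ballL] := bopen_mxnorm_ball L_open L0.
have [M M_ge0 boundL] := bcompact_mxnorm_bounded L_compact.
have [e e_gt0 [ec_lt1 Mce_lt_r]] := perturbation_radius M_ge0 (mxnorm_ge0 K G) r_gt0.
have lbound F1 : mxnorm K (F1 - F0) < e ->
    forall w : 'rV[F]_m, mxnorm K w <= mxnorm K (w *m F1) * mxnorm K G.
  move=> F1_near; apply: mxnorm_le_perturbed_linv F0G _; apply: le_lt_trans ec_lt1.
  exact: ler_wpM2r (mxnorm_ge0 _ _) _ _ (ltW F1_near).
have in_L_bound F1 w : mxnorm K (F1 - F0) < e -> L (w *m F1) ->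
    mxnorm K w <= M * mxnorm K G.
  move=> F1_near /boundL wF1_le; apply: le_trans (lbound F1 F1_near w) _.
  by rewrite ler_wpM2r ?mxnorm_ge0.
exists (mball K F0 e); split; first by exists e.
move=> Fm /(mball_mxnorm e_gt0) Fm_near.
have F0_near : mxnorm K (F0 - F0) < e by rewrite subrr mxnorm0.
split; first exact: mulmx_inj_of_mxnorm_lbound (lbound Fm Fm_near).
have L_shift w : mxnorm K w <= M * mxnorm K G -> L (w *m Fm) <-> L (w *m F0).
  move=> w_le; apply: addr_closed_ball_stable LD ballL _ _ _.
  rewrite -mulmxBr; apply: le_lt_trans (mxnorm_mulmx _ _ _) _; apply: le_lt_trans Mce_lt_r.
  exact: ler_pM (mxnorm_ge0 _ _) (mxnorm_ge0 _ _) w_le (ltW Fm_near).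
move=> w; split=> -[_ Lw]; (split; first by exists w).
  exact/(L_shift w (in_L_bound _ _ Fm_near Lw)).
exact/(L_shift w (in_L_bound _ _ F0_near Lw)).
Qed.
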